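(* Let $n$ be a nonnegative integer, let $f_n(z),g_n(z)\in\mathbb{C}[z]$ be polynomials of length $\ell$ (i.e., of degree $\ell-1$), let $\sigma_n,\tau_n\in\{-1,1\}$, and let $f_{n+1}(z)=f_n(z)+\sigma_n z^\ell f_n^\dagger(-z)$ and $g_{n+1}(z)=g_n(z)+\tau_n z^\ell g_n^\dagger(-z)$. Then $\|f_{n+1}\|_2^2=2\|f_n\|_2^2$ and $\|g_{n+1}\|_2^2=2\|g_n\|_2^2$. Moreover, if for $j\in\{n,n+1\}$ we set \[ u_j=\|f_jg_j\|_2^2,\qquad v_j=\|f_j\widetilde{g}_j\|_2^2,\qquad w_j=\operatorname{Re}\int f_j\widetilde{f}_j\overline{g_j\widetilde{g}_j}, \] then \begin{enumerate} \item $u_{n+1}=2u_n+2v_n+2\sigma_n\tau_n w_n$, \item $v_{n+1}=2u_n+2v_n-2\sigma_n\tau_n w_n$, \item $w_{n+1}=2\sigma_n\tau_n u_n-2\sigma_n\tau_n v_n+2w_n$. \end{enumerate}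
   Context: For a polynomial $a(z)=a_0+\cdots+a_dz^d$ of degree $d$, its length is $1+d$ and $a^\dagger(z)=\overline{a_d}+\overline{a_{d-1}}z+\cdots+\overline{a_0}z^d$; $f_n^\dagger(-z)$ means $f_n^\dagger$ evaluated at $-z$. For a Laurent polynomial $a(z)=\sum_ja_jz^j$: $\widetilde{a}(z)=a(-z)$, $\overline{a(z)}=\sum_j\overline{a_j}z^{-j}$, $\int a$ is the constant coefficient $a_0$ (equivalently $\frac{1}{2\pi}\int_0^{2\pi}a(e^{i\theta})d\theta$), and $\|a\|_p=\left(\frac{1}{2\pi}\int_0^{2\pi}|a(e^{i\theta})|^pd\theta\right)^{1/p}$. *)

From HB Require Import structures.
From mathcomp Require Import all_boot all_order all_algebra.
Set Implicit Arguments. Unset Strict Implicit. Unset Printing Implicit Defensive.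
Import Order.TTheory GRing.Theory Num.Theory.
Local Open Scope ring_scope.

Section Defs.
Variable C : numClosedFieldType.

Definition pdagger (a : {poly C}) : {poly C} :=
  \poly_(i < size a) (a`_(size a - 1 - i))^*.

Definition pneg (a : {poly C}) : {poly C} := a \Po (- 'X).

(* Laurent polynomials: Laurent P k represents z^k * P(z), k : int. *)
Record laurent := Laurent { lpoly : {poly C}; lshift : int }.

Definition lofpoly (p : {poly C}) : laurent := Laurent p 0.
Definition lmul (a b : laurent) : laurent :=
  Laurent (lpoly a * lpoly b) (lshift a + lshift b).
(* conj(z^k P(z)) = sum_j conj(P_j) z^{-k-j} = z^{-k-d} P^dagger(z), d = deg P *)
Definition lconj (a : laurent) : laurent :=
  Laurent (pdagger (lpoly a)) (- lshift a - ((size (lpoly a)).-1)%:Z).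
(* tilde a (z) = a(-z) = (-1)^k z^k P(-z) *)
Definition ltilde (a : laurent) : laurent :=
  Laurent ((-1 : C) ^ lshift a *: pneg (lpoly a)) (lshift a).
(* integral = constant coefficient *)
Definition lint (a : laurent) : C :=
  if (lshift a <= 0)%R then (lpoly a)`_(`|lshift a|%N) else 0.

(* ||a||_2^2 = (1/2pi) int |a|^2 = int (a * conj a) *)
Definition l2sq (a : laurent) : C := 'Re (lint (lmul a (lconj a))).

Definition ucoef (f g : {poly C}) : C := l2sq (lmul (lofpoly f) (lofpoly g)).
Definition vcoef (f g : {poly C}) : C :=
  l2sq (lmul (lofpoly f) (ltilde (lofpoly g))).
Definition wcoef (f g : {poly C}) : C :=
  'Re (lint (lmul (lmul (lofpoly f) (ltilde (lofpoly f)))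
                  (lconj (lmul (lofpoly g) (ltilde (lofpoly g)))))).

Definition step (l : nat) (s : C) (f : {poly C}) : {poly C} :=
  f + s *: ('X^l * pneg (pdagger f)).
End Defs.

(* On the unit circle z^N conj(p(z)) is a polynomial when deg p <= N, so each integral
   int P conj(Q) defining u, v, w is the middle coefficient of a polynomial product.  The
   reflection of f_{n+1} = f + s z^l f^dagger(-z) is again built from z^l f^dagger and
   f(-z), so by a polynomial identity each quantity at step n+1 is the claimed
   combination plus cross terms linear in s or t.  For u these cross terms are odd
   polynomials read at an even index; for w they come in pairs c^* - c, with no real part.
   The v recurrence follows from the u one since v(f, g) = u(f, g(-z)) and g_{n+1}(-z) is
   the step of g(-z) with sign -t. *)

From HB Require Import structures.
From mathcomp Require Import all_boot all_order all_algebra.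
From mathcomp Require Import zify ring.
Import Order.TTheory GRing.Theory Num.Theory.
Local Open Scope ring_scope.
Set Implicit Arguments. Unset Strict Implicit. Unset Printing Implicit Defensive.

Section Reflections.
Variable C : numClosedFieldType.
Implicit Types (p q : {poly C}) (c : C).

Lemma coefXnM_add n i p : ('X^n * p)`_(n + i) = p`_i.
Proof. by rewrite coefXnM ltnNge leq_addr addKn. Qed.

Lemma coefXnM_small n i p : (i < n)%N -> ('X^n * p)`_i = 0.
Proof. by move=> lt_in; rewrite coefXnM lt_in. Qed.

Lemma size_mul_leS m n p q : (size p <= m.+1)%N -> (size q <= n.+1)%N ->
  (size (p * q)%R <= (m + n).+1)%N.
Proof. by move=> sp sq; apply: leq_trans (size_polyMleq p q) _; move: sp sq; lia. Qed.

Lemma Re_signM c z : c = 1 \/ c = -1 -> 'Re (c * z) = c * 'Re z.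
Proof. by case=> ->; rewrite ?mul1r ?mulN1r ?raddfN. Qed.

Lemma opp_sign c : c = 1 \/ c = -1 -> - c = 1 \/ - c = -1.
Proof. by case=> ->; [right | left; rewrite opprK]. Qed.

Lemma conj_sign c : c = 1 \/ c = -1 -> c^* = c.
Proof. by case=> ->; rewrite ?rmorphN rmorph1. Qed.

Lemma sign_pm1 (n : nat) : (-1) ^+ n = 1 :> C \/ (-1) ^+ n = -1 :> C.
Proof. by rewrite -signr_odd; case: (odd n); [right | left]. Qed.

Lemma coef_pneg p i : (pneg p)`_i = (-1) ^+ i * p`_i.
Proof.
elim/poly_ind: p i => [|p c IH] i; first by rewrite /pneg comp_poly0 !coef0 mulr0.
rewrite /pneg comp_poly_MXaddC -/(pneg p) mulrN !(coefD, coefC, coefN, coefMX).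
case: i => [|i] /=; first by rewrite oppr0 add0r mul1r.
by rewrite IH !addr0 exprS mulN1r mulNr.
Qed.

Lemma size_pneg p : size (pneg p) = size p.
Proof. by rewrite /pneg size_comp_poly2 // size_polyN size_polyX. Qed.

Lemma size_mul_pneg n p : (size p <= n.+1)%N -> (size (p * pneg p)%R <= (n + n).+1)%N.
Proof. by move=> sp; rewrite size_mul_leS ?size_pneg. Qed.

Lemma pnegK : involutive (@pneg C).
Proof. by move=> p; apply/polyP => i; rewrite !coef_pneg mulrA -expr2 sqrr_sign mul1r. Qed.

Lemma pnegD p q : pneg (p + q) = pneg p + pneg q. Proof. exact: comp_polyD. Qed.
Lemma pnegM p q : pneg (p * q) = pneg p * pneg q. Proof. exact: comp_polyM. Qed.
Lemma pnegC c : pneg c%:P = c%:P. Proof. exact: comp_polyC. Qed.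

Lemma pnegX p n : pneg (p ^+ n) = pneg p ^+ n.
Proof.
elim: n => [|n IH]; last by rewrite !exprS pnegM IH.
by rewrite !expr0 /pneg comp_polyC.
Qed.

Lemma pnegXn n : pneg 'X^n = ((-1) ^+ n)%:P * 'X^n :> {poly C}.
Proof.
apply/polyP => i; rewrite coef_pneg coefCM !coefXn.
by case: eqP => [->|]; rewrite ?mulr1 ?mulr0.
Qed.

Lemma coef_pneg_even p i : ~~ odd i -> (pneg p)`_i = p`_i.
Proof. by move=> ei; rewrite coef_pneg -signr_odd (negbTE ei) mul1r. Qed.

Lemma coef_pnegN_even p i : pneg p = - p -> ~~ odd i -> p`_i = 0.
Proof.
move=> pN ei; apply/eqP; rewrite -[_ == 0](mulrn_eq0 _ 2) mulr2n.
by rewrite -{1}(coef_pneg_even p ei) pN coefN addNr.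
Qed.

(* [crev N p] is z^N conj(p(z)) on the unit circle, a polynomial when size p <= N.+1. *)
Definition crev N p : {poly C} := \poly_(i < N.+1) (p`_(N - i))^*.

Lemma coef_crev N p k : (crev N p)`_k = if (k <= N)%N then (p`_(N - k))^* else 0.
Proof. by rewrite coef_poly ltnS. Qed.

Lemma size_crev N p : (size (crev N p) <= N.+1)%N.
Proof. exact: size_poly. Qed.

Lemma crev0 N : crev N 0 = 0.
Proof. by apply/polyP => k; rewrite coef_crev !coef0 rmorph0 if_same. Qed.

Lemma crevD N p q : crev N (p + q) = crev N p + crev N q.
Proof.
by apply/polyP => k; rewrite coefD !coef_crev coefD rmorphD; case: ifP; rewrite ?addr0.
Qed.

Lemma crevN N p : crev N (- p) = - crev N p.
Proof.
by apply/polyP => k; rewrite coefN !coef_crev coefN rmorphN; case: ifP; rewrite ?oppr0.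
Qed.

Lemma crevCM N c p : crev N (c%:P * p) = (c^*)%:P * crev N p.
Proof.
by apply/polyP => k; rewrite coefCM !coef_crev coefCM rmorphM; case: ifP; rewrite ?mulr0.
Qed.

Lemma crevMX N p : crev N.+1 (p * 'X) = crev N p.
Proof.
apply/polyP => k; rewrite !coef_crev coefMX.
case: (leqP k N) => kN; first by rewrite (leqW kN) subSn.
by case: ifP => // kN1; rewrite (_ : N.+1 - k = 0)%N ?eqxx ?rmorph0 //; lia.
Qed.

Lemma crevC N c : crev N c%:P = (c^*)%:P * 'X^N.
Proof.
apply/polyP => k; rewrite coef_crev coefCM coefXn coefC.
case: (ltngtP k N) => [kN|kN|->]; rewrite ?subnn ?mulr1 ?mulr0 //.
by rewrite subn_eq0 leqNgt kN rmorph0.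
Qed.

Lemma crevXn N : crev N 'X^N = 1.
Proof.
apply/polyP => k; rewrite coef_crev coefXn coef1.
case: (leqP k N) => kN; last by case: k kN => // k; rewrite rmorph0.
rewrite (_ : (N - k == N) = (k == 0))%N; last by apply/eqP/eqP; lia.
by case: eqP; rewrite ?rmorph1 ?rmorph0.
Qed.

Lemma crev_shift N M q : (size q <= M.+1)%N -> crev (N + M) q = 'X^N * crev M q.
Proof.
move=> sq; apply/polyP => k; rewrite coefXnM !coef_crev.
case: (ltnP k N) => kN.
  by rewrite nth_default ?rmorph0 ?if_same //; apply: leq_trans sq _; lia.
rewrite (_ : k - N <= M = (k <= N + M))%N; last by apply/idP/idP; lia.
by rewrite (_ : N + M - k = M - (k - N))%N //; lia.
Qed.

Lemma crevM N M p q : (size p <= N.+1)%N -> (size q <= M.+1)%N ->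
  crev (N + M) (p * q) = crev N p * crev M q.
Proof.
elim/poly_ind: p N => [|p c IH] N sp sq.
  by rewrite !mul0r !crev0 mul0r.
have {}sp : (size p <= N)%N.
  by move: sp; rewrite size_MXaddC; case: ifP => [/andP[/eqP-> _]|_]; rewrite ?size_poly0.
case: N sp => [|N] sp.
  move: sp; rewrite leqn0 size_poly_eq0 => /eqP->.
  by rewrite mul0r add0r add0n crevC expr0 mulr1 crevCM.
rewrite mulrDl -mulrA (mulrC 'X) mulrA addSn !crevD !crevMX IH // crevCM crevC.
by rewrite -addSn crev_shift // mulrDl mulrA.
Qed.

Lemma crevXnM a b M p : (size p <= M.+1)%N ->
  crev (a + (b + M)) ('X^a * p) = 'X^b * crev M p.
Proof.
move=> sp; rewrite crevM ?size_polyXn ?crevXn ?mul1r ?crev_shift //.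
by apply: leq_trans sp _; rewrite ltnS leq_addl.
Qed.

Lemma coef_crev_double N p : (crev (N + N) p)`_N = (p`_N)^*.
Proof. by rewrite coef_crev leq_addr addnK. Qed.

Lemma crevK N p : (size p <= N.+1)%N -> crev N (crev N p) = p.
Proof.
move=> sp; apply/polyP => k; rewrite !coef_crev.
case: leqP => kN; last by rewrite nth_default //; apply: leq_trans sp _.
by rewrite leq_subr conjCK subKn.
Qed.

Lemma crev_pneg N p : crev N (pneg p) = ((-1) ^+ N)%:P * pneg (crev N p).
Proof.
apply/polyP => k; rewrite coefCM coef_pneg !coef_crev coef_pneg.
case: leqP => kN; last by rewrite !mulr0.
rewrite rmorphM rmorph_sign mulrA -exprD; congr (_ * _).
by rewrite -[in RHS](subnK kN) -addnA exprD addnn -mul2n mulnC exprM sqrr_sign mulr1.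
Qed.

Lemma pdagger_crev p : pdagger p = crev (size p).-1 p.
Proof.
apply/polyP => k; rewrite coef_poly coef_crev.
case E: (size p) => [|n] /=; first by rewrite nth_default ?E ?rmorph0 ?if_same.
by rewrite ltnS subn1.
Qed.

End Reflections.

Section InnerProduct.
Variable C : numClosedFieldType.
Implicit Types p q f g : {poly C}.

Definition dotp p q : C := \sum_(i < size q) p`_i * (q`_i)^*.

Lemma dotp_widen n p q : (size q <= n)%N -> dotp p q = \sum_(i < n) p`_i * (q`_i)^*.
Proof.
move=> sq; rewrite /dotp (big_ord_widen n (fun i => p`_i * (q`_i)^*) sq) big_mkcond.
by apply: eq_bigr => i _; case: ltnP => // qi; rewrite [q`_i]nth_default ?rmorph0 ?mulr0.
Qed.

Lemma coef_mul_crev N p q : (size q <= N.+1)%N -> (p * crev N q)`_N = dotp p q.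
Proof.
move=> sq; rewrite coefM (dotp_widen _ sq); apply: eq_bigr => -[j /= jN] _.
by rewrite coef_crev leq_subr subKn.
Qed.

Lemma conj_dotp p q : (dotp p q)^* = dotp q p.
Proof.
rewrite !(@dotp_widen (size p + size q)) ?leq_addl ?leq_addr // rmorph_sum.
by apply: eq_bigr => i _; rewrite rmorphM /= conjCK mulrC.
Qed.

Lemma dotp_pneg p q : dotp (pneg p) (pneg q) = dotp p q.
Proof.
rewrite /dotp size_pneg; apply: eq_bigr => i _.
by rewrite !coef_pneg rmorphM rmorph_sign mulrACA -expr2 sqrr_sign mul1r.
Qed.

Lemma coef_mul_crevM N M r p q : (size p <= N.+1)%N -> (size q <= M.+1)%N ->
  (r * (crev N p * crev M q))`_(N + M) = dotp r (p * q).
Proof. by move=> sp sq; rewrite -crevM // coef_mul_crev // size_mul_leS. Qed.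

Lemma lmul_lofpoly p q : lmul (lofpoly p) (lofpoly q) = lofpoly (p * q).
Proof. by rewrite /lmul /= addr0. Qed.

Lemma ltilde_lofpoly p : ltilde (lofpoly p) = lofpoly (pneg p).
Proof. by rewrite /ltilde /= expr0z scale1r. Qed.

Lemma lint_lconj p q : lint (lmul (lofpoly p) (lconj (lofpoly q))) = dotp p q.
Proof.
rewrite /lint /= oppr0 sub0r add0r oppr_le0 lez_nat abszN absz_nat.
by rewrite pdagger_crev coef_mul_crev // leqSpred.
Qed.

Lemma l2sq_lofpoly p : l2sq (lofpoly p) = 'Re (dotp p p).
Proof. by rewrite /l2sq lint_lconj. Qed.

Lemma ucoefE f g : ucoef f g = 'Re (dotp (f * g) (f * g)).
Proof. by rewrite /ucoef lmul_lofpoly l2sq_lofpoly. Qed.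

Lemma vcoefE f g : vcoef f g = ucoef f (pneg g).
Proof. by rewrite /vcoef ltilde_lofpoly. Qed.

Lemma wcoefE f g : wcoef f g = 'Re (dotp (f * pneg f) (g * pneg g)).
Proof. by rewrite /wcoef !ltilde_lofpoly !lmul_lofpoly lint_lconj. Qed.

Lemma wcoef_pneg f g : wcoef f (pneg g) = wcoef f g.
Proof. by rewrite !wcoefE pnegK (mulrC (pneg g)). Qed.

End InnerProduct.

Ltac sign_cases :=
  repeat match goal with H : ?x = 1 \/ ?x = -1 |- _ => case: H => -> end;
  rewrite ?polyCN ?polyC1.

Section StepIdentities.
Variable C : numClosedFieldType.

(* Read Y as z^(d+1), e as (-1)^d, r and q as [crev d f] and [crev d g], and a prime
   as the substitution z -> -z. *)

Lemma norm_step_identity (f f' r r' Y : {poly C}) (s e : C) :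
  s = 1 \/ s = -1 -> e = 1 \/ e = -1 ->
  (f + s%:P * (Y * r')) * (Y * r + s%:P * (e%:P * f')) =
  Y * (f * r) + Y * (f' * (e%:P * r')) + s%:P * (e%:P * (f * f') + Y ^+ 2 * (r * r')).
Proof. by move=> ? ?; sign_cases; ring. Qed.

Lemma ucoef_step_identity (f f' r r' g g' q q' Y : {poly C}) (s t e : C) :
  s = 1 \/ s = -1 -> t = 1 \/ t = -1 -> e = 1 \/ e = -1 ->
  (f + s%:P * (Y * r')) * (g + t%:P * (Y * q')) *
    ((Y * r + s%:P * (e%:P * f')) * (Y * q + t%:P * (e%:P * g'))) =
  Y ^+ 2 * (f * g * (r * q) + f * g' * (r * (e%:P * q'))
            + f' * g * (e%:P * r' * q) + f' * g' * (e%:P * r' * (e%:P * q')))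
  + s%:P * (Y * ((e%:P * (f * f') + Y ^+ 2 * (r * r')) * (g * q + e%:P * (g' * q'))))
  + t%:P * (Y * ((f * r + e%:P * (f' * r')) * (e%:P * (g * g') + Y ^+ 2 * (q * q'))))
  + s%:P * t%:P * (f * f' * (g * g') + Y ^+ 2 * (f * f' * (q * (e%:P * q')))
                   + Y ^+ 2 * (g * g' * (r * (e%:P * r'))) + Y ^+ 4 * (r * r' * (q * q'))).
Proof. by move=> ? ? ?; sign_cases; ring. Qed.

Lemma wcoef_step_identity (f f' r r' g g' q q' Y : {poly C}) (s t e : C) :
  s = 1 \/ s = -1 -> t = 1 \/ t = -1 -> e = 1 \/ e = -1 ->
  (f + s%:P * (Y * r')) * (f' + s%:P * (- (e%:P * Y) * r)) *
    ((Y * q + t%:P * (e%:P * g')) * (- 1 * (- (e%:P * Y) * q' + t%:P * (e%:P * g)))) =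
  Y ^+ 2 * (f * f' * (q * (e%:P * q'))) + Y ^+ 2 * (g * g' * (r * (e%:P * r')))
    - f * f' * (g * g') - Y ^+ 4 * (r * r' * (q * q'))
  + s%:P * (Y ^+ 3 * ((r' * f' - e%:P * (f * r)) * (q * (e%:P * q')))
            - Y * ((r' * f' - e%:P * (f * r)) * (g * g')))
  + t%:P * (Y * ((q' * g' - e%:P * (g * q)) * (f * f'))
            - Y ^+ 3 * ((q' * g' - e%:P * (g * q)) * (r * (e%:P * r'))))
  + s%:P * t%:P * (Y ^+ 2 * (f * g * (r * q) - f * g' * (r * (e%:P * q'))
            - f' * g * (e%:P * r' * q) + f' * g' * (e%:P * r' * (e%:P * q')))).
Proof. by move=> ? ? ?; sign_cases; ring. Qed.

End StepIdentities.

Section Step.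
Variables (C : numClosedFieldType) (d : nat).
Implicit Types (f g p : {poly C}) (s t : C).

Local Notation Y := ('X^(d.+1) : {poly C}).
Local Notation e := ((-1) ^+ d : C).

Lemma stepE s p : size p = d.+1 -> step d.+1 s p = p + s%:P * (Y * pneg (crev d p)).
Proof. by move=> sp; rewrite /step pdagger_crev sp mul_polyC. Qed.

Lemma size_step s p : size p = d.+1 -> (size (step d.+1 s p) <= (d + d).+2)%N.
Proof.
move=> sp; rewrite stepE // mul_polyC.
apply: leq_trans (size_polyD _ _) _; rewrite geq_max sp ltnS (leq_trans (leq_addl d d)) //=.
apply: leq_trans (size_scale_leq _ _) _; apply: leq_trans (size_polyMleq _ _) _.
by rewrite size_polyXn size_pneg; have := size_crev d p; lia.
Qed.

Lemma pnegY : pneg Y = - (e%:P * Y).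
Proof. by rewrite pnegXn exprS polyCM polyCN polyC1 mulN1r mulNr. Qed.

Lemma crev_step s p : size p = d.+1 -> s^* = s ->
  crev (d + d).+1 (step d.+1 s p) = Y * crev d p + s%:P * (e%:P * pneg p).
Proof.
move=> sp sR; rewrite stepE // crevD crevCM sR -addSn crev_shift ?sp //.
rewrite crevM ?size_polyXn ?size_pneg ?size_crev // crevXn mul1r.
by rewrite crev_pneg crevK ?sp.
Qed.

Lemma l2sq_step s f : size f = d.+1 -> s = 1 \/ s = -1 ->
  l2sq (lofpoly (step d.+1 s f)) = 2 * l2sq (lofpoly f).
Proof.
move=> sf s_sign.
rewrite !l2sq_lofpoly -(coef_mul_crev _ (size_step s sf)) crev_step ?conj_sign //.
rewrite stepE // (norm_step_identity _ _ _ _ _ s_sign (sign_pm1 _ d)).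
rewrite !coefD coefCM -addSn !coefXnM_add -crev_pneg.
rewrite !coef_mul_crev ?size_pneg ?sf // dotp_pneg.
rewrite coefD coefCM -exprM coefXnM_small ?addr0; last by rewrite mulnC; lia.
rewrite nth_default ?mulr0 ?addr0; last by rewrite addSn size_mul_leS ?size_pneg ?sf.
by rewrite raddfD mulr_natl mulr2n.
Qed.

Local Notation N := ((d + d).+1 + (d + d).+1)%N.

Lemma coefY2M p : (Y ^+ 2 * p)`_N = p`_(d + d).
Proof. by rewrite -exprM (_ : N = d.+1 * 2 + (d + d))%N ?coefXnM_add //; lia. Qed.

Lemma coefY4M p : (Y ^+ 4 * p)`_N = 0.
Proof. by rewrite -exprM coefXnM_small //; lia. Qed.

Lemma ucoef_step s t f g : size f = d.+1 -> size g = d.+1 ->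
  s = 1 \/ s = -1 -> t = 1 \/ t = -1 ->
  ucoef (step d.+1 s f) (step d.+1 t g) =
  2 * ucoef f g + 2 * vcoef f g + 2 * s * t * wcoef f g.
Proof.
move=> sf sg s_sign t_sign; have e_sign := sign_pm1 C d.
have [sf' sg'] : (size f <= d.+1)%N /\ (size g <= d.+1)%N by rewrite sf sg.
rewrite ucoefE -(coef_mul_crev _ (size_mul_leS (size_step s sf) (size_step t sg))).
rewrite crevM ?size_step // !crev_step ?conj_sign // !stepE //.
rewrite (ucoef_step_identity _ _ _ _ _ _ _ _ _ s_sign t_sign e_sign).
set r := crev d f; set q := crev d g.
(* The terms linear in s or t are odd polynomials, while N is even. *)
have odd_s : (Y * ((e%:P * (f * pneg f) + Y ^+ 2 * (r * pneg r)) *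
                  (g * q + e%:P * (pneg g * pneg q))))`_N = 0.
  apply: coef_pnegN_even; last by rewrite oddD addbb.
  by rewrite !(pnegY, pnegM, pnegD, pnegC, pnegX, pnegK); sign_cases; ring.
have odd_t : (Y * ((f * r + e%:P * (pneg f * pneg r)) *
                  (e%:P * (g * pneg g) + Y ^+ 2 * (q * pneg q))))`_N = 0.
  apply: coef_pnegN_even; last by rewrite oddD addbb.
  by rewrite !(pnegY, pnegM, pnegD, pnegC, pnegX, pnegK); sign_cases; ring.
rewrite -polyCM !coefD !coefCM odd_s odd_t !mulr0 !addr0 !coefD !coefY2M coefY4M !coefD.
rewrite /r /q -!crev_pneg !coef_mul_crevM ?size_pneg ?sf ?sg //.
rewrite nth_default ?add0r ?addr0; last first.
  by apply: leq_trans (size_mul_leS (size_mul_pneg sf') (size_mul_pneg sg')) _; lia.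
rewrite -[dotp (pneg f * g) _]dotp_pneg -[dotp (pneg f * pneg g) _]dotp_pneg !pnegM !pnegK.
rewrite -(conj_dotp (f * pneg f)) ucoefE vcoefE ucoefE wcoefE.
rewrite !raddfD /= -mulrA !Re_signM // raddfD /= Re_conj; ring.
Qed.

Lemma pneg_step t p : size p = d.+1 -> pneg (step d.+1 t p) = step d.+1 (- t) (pneg p).
Proof.
move=> sp; have e_sign := sign_pm1 C d.
rewrite !stepE ?size_pneg // crev_pneg !(pnegY, pnegD, pnegM, pnegC, pnegK) polyCN.
by sign_cases; ring.
Qed.

Lemma vcoef_step s t f g : size f = d.+1 -> size g = d.+1 ->
  s = 1 \/ s = -1 -> t = 1 \/ t = -1 ->
  vcoef (step d.+1 s f) (step d.+1 t g) =
  2 * ucoef f g + 2 * vcoef f g - 2 * s * t * wcoef f g.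
Proof.
move=> sf sg s_sign t_sign.
rewrite vcoefE pneg_step // ucoef_step ?size_pneg ?opp_sign //; last exact: opp_sign.
by rewrite -vcoefE [vcoef f (pneg g)]vcoefE pnegK wcoef_pneg; ring.
Qed.

Local Notation mixed p := (pneg (crev d p) * pneg p - e%:P * (p * crev d p)).

Lemma crev_mixed p : size p = d.+1 -> crev (d + d) (mixed p) = mixed p.
Proof.
move=> sp; have e_sign := sign_pm1 C d.
rewrite crevD crevN crevCM !crevM ?size_pneg ?size_crev ?sp // !crev_pneg crevK ?sp //.
by rewrite conj_sign //; sign_cases; ring.
Qed.

Lemma coef_mixed_reflect p (h : {poly C}) : size p = d.+1 -> size h = d.+1 ->
  (Y ^+ 3 * (mixed p * (crev d h * (e%:P * pneg (crev d h)))))`_N =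
  ((Y * (mixed p * (h * pneg h)))`_N)^*.
Proof.
move=> sp sh; have sh' : (size h <= d.+1)%N by rewrite sh.
have size_mixed : (size (mixed p) <= (d + d).+1)%N by rewrite -crev_mixed ?size_crev.
rewrite -coef_crev_double.
rewrite (_ : N + N = d.+1 + (d.+1 * 3 + (d + d + (d + d))))%N; last by lia.
rewrite crevXnM; last exact: size_mul_leS size_mixed (size_mul_pneg sh').
by rewrite crevM ?size_mul_pneg // crev_mixed // crevM ?size_pneg ?sh // crev_pneg exprM.
Qed.

Lemma wcoef_step s t f g : size f = d.+1 -> size g = d.+1 ->
  s = 1 \/ s = -1 -> t = 1 \/ t = -1 ->
  wcoef (step d.+1 s f) (step d.+1 t g) =
  2 * s * t * ucoef f g - 2 * s * t * vcoef f g + 2 * wcoef f g.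
Proof.
move=> sf sg s_sign t_sign; have e_sign := sign_pm1 C d.
have [sf' sg'] : (size f <= d.+1)%N /\ (size g <= d.+1)%N by rewrite sf sg.
rewrite wcoefE -(coef_mul_crev _ (size_mul_pneg (size_step t sg))).
rewrite crevM ?size_pneg ?size_step // crev_pneg crev_step ?conj_sign // !stepE //.
rewrite !(pnegY, pnegD, pnegM, pnegC, pnegK).
rewrite (_ : (-1) ^+ (d + d).+1 = -1 :> C); last by rewrite -signr_odd /= oddD addbb.
rewrite polyCN polyC1 (wcoef_step_identity _ _ _ _ _ _ _ _ _ s_sign t_sign e_sign).
(* The terms linear in s or t become c^* - c, with zero real part. *)
rewrite -polyCM !coefD !coefN !coefCM !coefD !coefN !coef_mixed_reflect //.
rewrite !coefY2M coefY4M !coefD !coefN -!crev_pneg !coef_mul_crevM ?size_pneg ?sf ?sg //.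
rewrite nth_default ?subr0; last first.
  by apply: leq_trans (size_mul_leS (size_mul_pneg sf') (size_mul_pneg sg')) _; lia.
rewrite -[dotp (pneg f * g) _]dotp_pneg -[dotp (pneg f * pneg g) _]dotp_pneg !pnegM !pnegK.
rewrite -(conj_dotp (f * pneg f)) ucoefE vcoefE ucoefE wcoefE.
by rewrite !raddfD /= -mulrA !Re_signM // !(raddfD, raddfN) /= !Re_conj; ring.
Qed.

End Step.

Theorem lemma2p3 (C : numClosedFieldType) (l : nat) (f g : {poly C})
  (s t : C) :
  size f = l -> size g = l ->
  (s = 1 \/ s = -1) -> (t = 1 \/ t = -1) ->
  let f1 := step l s f in
  let g1 := step l t g in
  l2sq (lofpoly f1) = 2 * l2sq (lofpoly f) /\
  l2sq (lofpoly g1) = 2 * l2sq (lofpoly g) /\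
  ucoef f1 g1 = 2 * ucoef f g + 2 * vcoef f g + 2 * s * t * wcoef f g /\
  vcoef f1 g1 = 2 * ucoef f g + 2 * vcoef f g - 2 * s * t * wcoef f g /\
  wcoef f1 g1 = 2 * s * t * ucoef f g - 2 * s * t * vcoef f g + 2 * wcoef f g.
Proof.
move=> sf sg s_sign t_sign /=.
case: l sf sg => [|d] sf sg; last first.
  by rewrite !l2sq_step ?ucoef_step ?vcoef_step ?wcoef_step.
move/eqP: sf; move/eqP: sg; rewrite !size_poly_eq0 => /eqP-> /eqP->.
have step0 c : step 0 c (0 : {poly C}) = 0.
  by rewrite /step pdagger_crev crev0 /pneg comp_poly0 mulr0 scaler0 addr0.
rewrite !step0 vcoefE !ucoefE wcoefE l2sq_lofpoly !mul0r /dotp size_poly0 big_ord0 raddf0.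
by rewrite !mulr0 !addr0 subr0.
Qed.
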